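(* Let $f(\cdot;\theta_A)$, $\theta_A\in\mathbb R^{M_A}$ (model A), and $g(\cdot;\theta_B)$, $\theta_B\in\mathbb R^{M_B}$ (model B), be models on $\mathbb R^d$, and suppose there exists a critical mapping $\mathcal P:\mathbb R^{M_A}\to\mathbb R^{M_B}$ from model A to model B. Then for every $f^*\in\mathcal F_A=\{f(\cdot;\theta_A):\theta_A\in\mathbb R^{M_A}\}$ we have $f^*\in\mathcal F_B$ and $O_g(f^* )\leq O_f(f^* )\leq M_A$.
   Context: A model is a map $h:\mathbb R^d\times\mathbb R^M\to\mathbb R$, $(x,\theta)\mapsto h(x;\theta)=h_\theta(x)$, differentiable in both $x$ and $\theta$; its function space is $\{h_\theta:\theta\in\mathbb R^M\}$. A map $\mathcal P:\mathbb R^{M_A}\to\mathbb R^{M_B}$ is a critical mapping from model A ($f$) to model B ($g$) if for every $\theta\in\mathbb R^{M_A}$: (i) $f(\cdot;\theta)=g(\cdot;\mathcal P(\theta))$; (ii) for every finite dataset $S=\{(x_i,y_i)\}_{i=1}^n\subset\mathbb R^d\times\mathbb R$ with mean-squared risk $R_S(h)=\frac12\sum_{i=1}^n(h(x_i)-y_i)^2$, if the gradient of $\theta_A\mapsto R_S(f(\cdot;\theta_A))$ vanishes at $\theta$, then the gradient of $\theta_B\mapsto R_S(g(\cdot;\theta_B))$ vanishes at $\mathcal P(\theta)$. The loss $\ell:\mathbb R\times\mathbb R\to[0,\infty)$ is continuously differentiable with $\ell(u,v)=0$ iff $u=v$. For a model $h$ and $f^*$ in its function space, the target set is $\mathcal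 M_{f^*}=\{\theta:h_\theta=f^*\}$; a dataset from $f^*$ of size $n$ is $\{(x_i,f^*(x_i))\}_{i=1}^n$ with empirical loss $\frac1n\sum_i\ell(u(x_i),f^*(x_i))$ for a function $u$ (identically $0$ if $n=0$); the tangent hyperplane at $\theta'$ is $\{h(\cdot;\theta')+a^\top\nabla_\theta h(\cdot;\theta'):a\in\mathbb R^M\}$; $f^*$ has $n$-sample LLR-guarantee (for model $h$) if there are a dataset of size $n$ from $f^*$ and $\theta'\in\mathcal M_{f^*}$ such that the set of minimizers of the empirical loss over the tangent hyperplane at $\theta'$ is exactly $\{f^*\}$. The optimistic sample size $O_h(f^* )$ is the smallest $n\geq0$ such that $f^*$ has $n$-sample LLR-guarantee for model $h$. *)

From HB Require Import structures.
From mathcomp Require Import all_boot all_order all_algebra.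
From mathcomp Require Import all_classical all_reals all_analysis.
Set Implicit Arguments. Unset Strict Implicit. Unset Printing Implicit Defensive.
Import Order.TTheory GRing.Theory Num.Theory.
Import numFieldNormedType.Exports.
Local Open Scope ring_scope.
Local Open Scope classical_set_scope.

Section Defs.
Variable R : realType.

Definition is_model (d M : nat) (h : 'rV[R]_d -> 'rV[R]_M -> R) : Prop :=
  (forall (x : 'rV[R]_d) (th : 'rV[R]_M), differentiable (h x) th) /\
  (forall (th : 'rV[R]_M) (x : 'rV[R]_d), differentiable (fun z => h z th) x).

Definition pgrad (d M : nat) (h : 'rV[R]_d -> 'rV[R]_M -> R)
  (x : 'rV[R]_d) (th : 'rV[R]_M) (i : 'I_M) : R :=
  derive (h x) th (delta_mx 0 i).

Definition sq_risk (d : nat) (S : seq ('rV[R]_d * R)) (u : 'rV[R]_d -> R) : R :=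
  2^-1 * \sum_(p <- S) (u p.1 - p.2) ^+ 2.

Definition risk_grad_vanishes (d M : nat) (h : 'rV[R]_d -> 'rV[R]_M -> R)
  (S : seq ('rV[R]_d * R)) (th : 'rV[R]_M) : Prop :=
  forall i : 'I_M,
    derive (fun t : 'rV[R]_M => sq_risk S (fun x => h x t)) th (delta_mx 0 i) = 0.

(* critical mapping from model A (f) to model B (g); a finite dataset is a
   finite set of pairs, represented as a duplicate-free list *)
Definition critical_mapping (d MA MB : nat)
  (f : 'rV[R]_d -> 'rV[R]_MA -> R) (g : 'rV[R]_d -> 'rV[R]_MB -> R)
  (P : 'rV[R]_MA -> 'rV[R]_MB) : Prop :=
  forall th : 'rV[R]_MA,
    (fun x => f x th) = (fun x => g x (P th)) /\
    (forall S : seq ('rV[R]_d * R), uniq S ->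
        risk_grad_vanishes f S th -> risk_grad_vanishes g S (P th)).

Definition is_loss (l : R -> R -> R) : Prop :=
  (forall u v, 0 <= l u v) /\
  (forall u v, l u v = 0 <-> u = v) /\
  (forall u v, derivable (fun w => l w v) u 1) /\
  (forall u v, derivable (fun w => l u w) v 1) /\
  continuous (fun p : R * R => derive (fun w => l w p.2) p.1 1) /\
  continuous (fun p : R * R => derive (fun w => l p.1 w) p.2 1).

(* empirical loss on the dataset {(xs i, fstar (xs i))}_{i<n}; 0 if n = 0 *)
Definition emp_loss (d n : nat) (l : R -> R -> R) (fstar : 'rV[R]_d -> R)
  (xs : 'I_n -> 'rV[R]_d) (u : 'rV[R]_d -> R) : R :=
  if n == 0%N then 0 else n%:R^-1 * \sum_(i < n) l (u (xs i)) (fstar (xs i)).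

Definition target_set (d M : nat) (h : 'rV[R]_d -> 'rV[R]_M -> R)
  (fstar : 'rV[R]_d -> R) : set 'rV[R]_M :=
  [set th | (fun x => h x th) = fstar].

Definition tangent_hyperplane (d M : nat) (h : 'rV[R]_d -> 'rV[R]_M -> R)
  (th' : 'rV[R]_M) : set ('rV[R]_d -> R) :=
  [set u | exists a : 'rV[R]_M,
     u = (fun x => h x th' + \sum_(i < M) a 0 i * pgrad h x th' i)].

(* fstar has n-sample LLR-guarantee for model h (w.r.t. loss l); a dataset of
   size n is given by n pairwise distinct inputs *)
Definition LLR_guarantee (d M : nat) (h : 'rV[R]_d -> 'rV[R]_M -> R)
  (l : R -> R -> R) (fstar : 'rV[R]_d -> R) (n : nat) : Prop :=
  exists (xs : 'I_n -> 'rV[R]_d) (th' : 'rV[R]_M),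
    injective xs /\ target_set h fstar th' /\
    (forall u : 'rV[R]_d -> R,
       (tangent_hyperplane h th' u /\
        (forall v, tangent_hyperplane h th' v ->
            emp_loss l fstar xs u <= emp_loss l fstar xs v))
       <-> u = fstar).

Definition is_optimistic_sample_size (d M : nat) (h : 'rV[R]_d -> 'rV[R]_M -> R)
  (l : R -> R -> R) (fstar : 'rV[R]_d -> R) (n : nat) : Prop :=
  LLR_guarantee h l fstar n /\
  (forall m, LLR_guarantee h l fstar m -> (n <= m)%N).

End Defs.

(* Since the loss is nonnegative and vanishes exactly on the diagonal, the
   empirical-loss minimisers on the tangent hyperplane at th' in M_{f*} are
   the tangent functions interpolating f* on the sample.  Hence f* has the
   LLR-guarantee with sample (x_i) iff every gradient grad_th h(x; th') lies
   in the span of the grad_th h(x_i; th').  A maximal sample with linearly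
   independent gradients has this property and at most M_A points.  The span
   property transfers along a critical mapping P: if grad f(x) is the
   combination sum_i c_i grad f(x_i), the dataset with residual -1 at x and
   c_i at x_i is critical for f at th', hence for g at P th', which says that
   grad g(x) = sum_i c_i grad g(x_i). *)

From HB Require Import structures.
From mathcomp Require Import all_boot all_order all_algebra.
From mathcomp Require Import all_classical all_reals all_analysis.
Import Order.TTheory GRing.Theory Num.Theory.
Import numFieldNormedType.Exports.
Set Implicit Arguments. Unset Strict Implicit. Unset Printing Implicit Defensive.
Local Open Scope ring_scope.

Section EmpiricalLoss.
Variables (R : realType) (d n : nat) (l : R -> R -> R).
Variables (fstar : 'rV[R]_d -> R) (xs : 'I_n -> 'rV[R]_d).
Hypothesis hl : is_loss l.

Lemma emp_loss_ge0 u : 0 <= emp_loss l fstar xs u.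
Proof.
have [l_ge0 _] := hl; rewrite /emp_loss; case: ifP => // _.
by rewrite mulr_ge0 ?invr_ge0 ?ler0n ?sumr_ge0.
Qed.

Lemma emp_loss_eq0 u :
  emp_loss l fstar xs u = 0 <-> forall i, u (xs i) = fstar (xs i).
Proof.
have [l_ge0 [l_eq0 _]] := hl; rewrite /emp_loss.
case: eqP => [n0|/eqP n0]; first by split=> // _ i; have := ltn_ord i; rewrite {2}n0.
have inv_n_neq0 : n%:R^-1 != 0 :> R by rewrite invr_eq0 pnatr_eq0.
split=> [/eqP|uE]; last by rewrite big1 ?mulr0 // => i _; apply/l_eq0.
rewrite mulf_eq0 (negbTE inv_n_neq0) /= => /eqP sum0 i.
by apply/l_eq0; apply: (psumr_eq0P _ sum0) => // j _.
Qed.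

End EmpiricalLoss.

Section TangentSpace.
Variables (R : realType) (d M : nat) (h : 'rV[R]_d -> 'rV[R]_M -> R).

Definition tangent_dir (th a : 'rV[R]_M) (x : 'rV[R]_d) : R :=
  \sum_(i < M) a 0 i * pgrad h x th i.

Definition param_grad (th : 'rV[R]_M) (x : 'rV[R]_d) : 'rV[R]_M :=
  \row_j pgrad h x th j.

Definition param_grad_mx (th : 'rV[R]_M) n (xs : 'I_n -> 'rV[R]_d) : 'M[R]_(n, M) :=
  \matrix_i param_grad th (xs i).

Definition unisolvent (th : 'rV[R]_M) n (xs : 'I_n -> 'rV[R]_d) : Prop :=
  forall a : 'rV[R]_M,
    (forall i, tangent_dir th a (xs i) = 0) -> forall x, tangent_dir th a x = 0.

Lemma tangent_dirE th a x : tangent_dir th a x = (param_grad th x *m a^T) 0 0.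
Proof. by rewrite mxE; apply: eq_bigr => i _; rewrite !mxE mulrC. Qed.

Lemma tangent_dir0 th x : tangent_dir th 0 x = 0.
Proof. by rewrite /tangent_dir big1 // => i _; rewrite mxE mul0r. Qed.

Lemma unisolventP th n (xs : 'I_n -> 'rV[R]_d) :
  unisolvent th xs <-> forall x, (param_grad th x <= param_grad_mx th xs)%MS.
Proof.
set A := param_grad_mx th xs.
have A_dir a : A *m a^T = \col_i tangent_dir th a (xs i).
  apply/colP => i; rewrite [RHS]mxE tangent_dirE !mxE.
  by apply: eq_bigr => j _; rewrite !mxE.
split=> [uni x | span a a0 x].
  rewrite submxE; apply/eqP/rowP => j; rewrite [RHS]mxE.
  have dirC y :
      tangent_dir th (col j (cokermx A))^T y = (param_grad th y *m cokermx A) 0 j.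
    by rewrite tangent_dirE trmxK !mxE; apply: eq_bigr => k _; rewrite !mxE.
  rewrite -dirC; apply: uni => i.
  by rewrite dirC -(rowK (fun i => param_grad th (xs i))) -row_mul mulmx_coker !mxE.
rewrite tangent_dirE; have /submxP [c ->] := span x.
rewrite -mulmxA A_dir (_ : \col_i _ = 0) ?mulmx0 ?mxE //.
by apply/colP => i; rewrite !mxE.
Qed.

Lemma tangent_hyperplane_minimizerP (l : R -> R -> R) (fstar : 'rV[R]_d -> R)
    th n (xs : 'I_n -> 'rV[R]_d) u :
  is_loss l -> target_set h fstar th ->
  (tangent_hyperplane h th u /\
   (forall v, tangent_hyperplane h th v ->
      emp_loss l fstar xs u <= emp_loss l fstar xs v)) <->
  exists2 a, u = (fun x => h x th + tangent_dir th a x) &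
             forall i, tangent_dir th a (xs i) = 0.
Proof.
move=> hl; rewrite /target_set /= => <-.
have tangent_fstar : tangent_hyperplane h th (fun x => h x th).
  by exists 0; apply: funext => x; rewrite -/(tangent_dir th 0 x) tangent_dir0 addr0.
split=> [[[a ->] u_min] | [a -> a0]].
  exists a => // i; apply: (addrI (h (xs i) th)); rewrite addr0.
  have : emp_loss l (fun x => h x th) xs (fun x => h x th + tangent_dir th a x) = 0.
    apply/eqP; rewrite eq_le emp_loss_ge0 // andbT.
    have <- : emp_loss l (h^~ th) xs (h^~ th) = 0 by apply/(emp_loss_eq0 _ _ hl).
    exact: u_min tangent_fstar.
  by move/(emp_loss_eq0 _ _ hl) => ->.
split; first by exists a.
move=> v _; rewrite (proj2 (emp_loss_eq0 _ _ hl _)) ?emp_loss_ge0 // => i.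
by rewrite a0 addr0.
Qed.

Lemma LLR_guaranteeP (l : R -> R -> R) (fstar : 'rV[R]_d -> R) n :
  is_loss l ->
  LLR_guarantee h l fstar n <->
  exists (xs : 'I_n -> 'rV[R]_d) th,
    [/\ injective xs, target_set h fstar th & unisolvent th xs].
Proof.
move=> hl; split=> [[xs [th [xs_inj [fstarE minE]]]] | [xs [th [xs_inj fstarE uni]]]].
  exists xs, th; split=> // a a0 x.
  have uE : (fun x => h x th + tangent_dir th a x) = fstar.
    by apply/minE/(tangent_hyperplane_minimizerP xs _ hl fstarE); exists a.
  by apply: (addrI (h x th)); rewrite addr0 (congr1 (@^~ x) uE) -fstarE.
exists xs, th; do 2!split=> //; move=> u.
rewrite (tangent_hyperplane_minimizerP xs _ hl fstarE).
split=> [[a -> a0] | ->].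
  by rewrite -fstarE; apply: funext => x; rewrite (uni a a0) addr0.
exists 0; last by move=> i; rewrite tangent_dir0.
by rewrite -fstarE; apply: funext => x; rewrite tangent_dir0 addr0.
Qed.

End TangentSpace.

Section ProbeDataset.
Variables (R : realType) (d M : nat) (h : 'rV[R]_d -> 'rV[R]_M -> R) (th : 'rV[R]_M).
Hypothesis h_diff : forall x, differentiable (h x) th.

Lemma derive_sq_risk (S : seq ('rV[R]_d * R)) v :
  'D_v (fun t => sq_risk S (fun x => h x t)) th =
  \sum_(p <- S) (h p.1 th - p.2) * 'D_v (h p.1) th.
Proof.
have sum_sq : is_derive th v (fun t => \sum_(p <- S) (h p.1 t - p.2) ^+ 2)
    (\sum_(p <- S) 2 * (h p.1 th - p.2) * 'D_v (h p.1) th).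
  elim: S => [|p S IH].
    by under eq_fun do rewrite big_nil; rewrite big_nil; apply: is_derive_cst.
  under eq_fun do rewrite big_cons; rewrite big_cons.
  have hp : is_derive th v (h p.1) ('D_v (h p.1) th).
    exact/derivableP/diff_derivable.
  have residual : is_derive th v (h p.1 - cst p.2) ('D_v (h p.1) th - 0).
    exact: is_deriveB.
  apply: (is_derive_eq (is_deriveD (is_deriveX 2 residual) IH)).
  by rewrite subr0 /= expr1 -mulr_natl.
have half_sum_sq := is_deriveZ (2^-1 : R) sum_sq.
rewrite /sq_risk -[X in 'D_v X th]/((2^-1 : R) \*: _) derive_val /GRing.scale /=.
rewrite big_distrr /=.
by apply: eq_bigr => p _; rewrite !mulrA mulVf ?mul1r ?pnatr_eq0.
Qed.

Definition probe_dataset n (xs : 'I_n -> 'rV[R]_d) (c : 'rV[R]_n) (x : 'rV[R]_d) :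
    seq ('rV[R]_d * R) :=
  (x, h x th + 1) :: [seq (xs i, h (xs i) th - c 0 i) | i <- enum 'I_n].

Lemma probe_dataset_uniq n (xs : 'I_n -> 'rV[R]_d) c x :
  injective xs -> (forall i, x <> xs i) -> uniq (probe_dataset xs c x).
Proof.
move=> xs_inj x_new /=; apply/andP; split.
  by apply/mapP => -[i _ [/x_new]].
by rewrite map_inj_uniq ?enum_uniq // => i j [/xs_inj].
Qed.

Lemma risk_grad_vanishes_probeP n (xs : 'I_n -> 'rV[R]_d) c x :
  risk_grad_vanishes h (probe_dataset xs c x) th <->
  param_grad h th x = c *m param_grad_mx h th xs.
Proof.
have gradE k :
    'D_(delta_mx 0 k) (fun t => sq_risk (probe_dataset xs c x) (fun y => h y t)) th =
    (c *m param_grad_mx h th xs) 0 k - param_grad h th x 0 k.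
  rewrite derive_sq_risk big_cons big_map big_enum /= opprD addrA subrr add0r mulN1r.
  rewrite addrC !mxE; congr (_ - _); apply: eq_bigr => i _.
  by rewrite opprB addrC subrK !mxE.
split=> [vanish | grad_x k]; last by rewrite gradE grad_x subrr.
by apply/rowP => k; apply/eqP; rewrite eq_sym -subr_eq0 -gradE vanish.
Qed.

End ProbeDataset.

Section CriticalMapping.
Variables (R : realType) (d MA MB : nat).
Variables (f : 'rV[R]_d -> 'rV[R]_MA -> R) (g : 'rV[R]_d -> 'rV[R]_MB -> R).
Variable P : 'rV[R]_MA -> 'rV[R]_MB.
Hypotheses (f_model : is_model f) (g_model : is_model g).
Hypothesis P_crit : critical_mapping f g P.

Lemma critical_mapping_unisolvent th n (xs : 'I_n -> 'rV[R]_d) :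
  injective xs -> unisolvent f th xs -> unisolvent g (P th) xs.
Proof.
move=> xs_inj /unisolventP f_span; apply/unisolventP => x.
have [[i ->] | x_new] := pselect (exists i, x = xs i).
  by rewrite -(rowK (fun i => param_grad g (P th) (xs i))) row_sub.
have {}x_new i : x <> xs i by move=> xE; apply: x_new; exists i.
have [fg_eq f_crit_g] := P_crit th.
have /submxP [c f_grad_x] := f_span x.
have probe_f : risk_grad_vanishes f (probe_dataset f th xs c x) th.
  by apply/risk_grad_vanishes_probeP => //; case: f_model.
have fgE y : f y th = g y (P th) by rewrite (congr1 (@^~ y) fg_eq).
have probe_g : probe_dataset f th xs c x = probe_dataset g (P th) xs c x.
  by rewrite /probe_dataset fgE; under eq_map do rewrite fgE.
move: (f_crit_g _ (probe_dataset_uniq _ _ _ xs_inj x_new) probe_f).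
by rewrite probe_g => /risk_grad_vanishes_probeP -> //; [rewrite submxMl | case: g_model].
Qed.

Lemma critical_mapping_LLR_guarantee l fstar n :
  is_loss l -> LLR_guarantee f l fstar n -> LLR_guarantee g l fstar n.
Proof.
move=> hl /(LLR_guaranteeP _ _ _ hl) [xs [th [xs_inj fstarE uni]]].
apply/(LLR_guaranteeP _ _ _ hl); exists xs, (P th); split=> //.
  by rewrite /target_set /=; have [<- _] := P_crit th.
exact: critical_mapping_unisolvent.
Qed.

End CriticalMapping.

Definition sample (R : realType) d (s : seq 'rV[R]_d) : 'I_(size s) -> 'rV[R]_d :=
  fun i => nth 0 s i.
Arguments sample {R d} s _.

Lemma sample_inj (R : realType) d (s : seq 'rV[R]_d) : uniq s -> injective (sample s).
Proof. by move=> s_uniq i j /eqP; rewrite /sample nth_uniq // => /eqP/val_inj. Qed.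

Section GreedySample.
Variables (R : realType) (d M : nat) (h : 'rV[R]_d -> 'rV[R]_M -> R) (th : 'rV[R]_M).

Local Notation grad_mx s := (param_grad_mx h th (sample s)).

Lemma param_grad_sub_sample (s : seq 'rV[R]_d) x :
  x \in s -> (param_grad h th x <= grad_mx s)%MS.
Proof.
move=> x_in; have x_idx : (index x s < size s)%N by rewrite index_mem.
by have := row_sub (Ordinal x_idx) (grad_mx s); rewrite rowK /sample nth_index.
Qed.

Lemma row_free_grad_mx_cons (s : seq 'rV[R]_d) x :
  row_free (grad_mx s) -> ~~ (param_grad h th x <= grad_mx s)%MS ->
  row_free (grad_mx (x :: s)).
Proof.
move=> s_free x_new.
have row_cons i : row i (grad_mx (x :: s)) = param_grad h th (sample (x :: s) i).
  exact: rowK.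
have s_sub : (grad_mx s <= grad_mx (x :: s))%MS.
  by apply/row_subP => i; rewrite rowK -[sample s i]/(sample (x :: s) (lift ord0 i))
    -row_cons row_sub.
have x_sub : (param_grad h th x <= grad_mx (x :: s))%MS.
  by rewrite -(row_cons ord0) row_sub.
have : (grad_mx s < grad_mx (x :: s))%MS.
  by rewrite ltmxE s_sub; apply: contra x_new => /(submx_trans x_sub).
by rewrite ltmxErank s_sub (eqP s_free) /row_free eqn_leq rank_leq_row.
Qed.

Lemma exists_unisolvent_sample :
  exists s, [/\ uniq s, (size s <= M)%N & unisolvent h th (sample s)].
Proof.
pose free_size k := `[< exists s, [/\ uniq s, size s = k & row_free (grad_mx s)] >].
have free0 : free_size 0%N.
  by apply/asboolP; exists [::]; split=> //; rewrite /row_free -leqn0 rank_leq_row.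
have free_le k : free_size k -> (k <= M)%N.
  by move=> /asboolP [s [_ <- /eqP s_free]]; rewrite -s_free rank_leq_col.
case: (ex_maxnP (ex_intro free_size 0%N free0) free_le).
move=> m /asboolP [s [s_uniq sE s_free]] s_max.
exists s; split=> //; first by rewrite sE free_le //; apply/asboolP; exists s.
apply/unisolventP => x; apply: contraT => x_new.
have x_notin : x \notin s by apply: contra x_new; exact: param_grad_sub_sample.
suff : (m.+1 <= m)%N by rewrite ltnn.
apply: s_max; apply/asboolP; exists (x :: s); split=> //=; first by rewrite x_notin.
  by rewrite sE.
exact: row_free_grad_mx_cons.
Qed.

End GreedySample.

Lemma exists_optimistic_sample_size (R : realType) d M (h : 'rV[R]_d -> 'rV[R]_M -> R)
    l fstar n :
  LLR_guarantee h l fstar n ->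
  exists2 m, is_optimistic_sample_size h l fstar m & (m <= n)%N.
Proof.
move=> guar_n; pose guar k := `[< LLR_guarantee h l fstar k >].
have [m /asboolP guar_m m_min] := ex_minnP (ex_intro guar n (asboolT guar_n)).
by exists m; [split=> // k /asboolP/m_min | apply/m_min/asboolP].
Qed.

Theorem mainTheorem10 (R : realType) (d MA MB : nat)
  (f : 'rV[R]_d -> 'rV[R]_MA -> R) (g : 'rV[R]_d -> 'rV[R]_MB -> R)
  (l : R -> R -> R) (P : 'rV[R]_MA -> 'rV[R]_MB) :
  is_model f -> is_model g -> is_loss l -> critical_mapping f g P ->
  forall fstar : 'rV[R]_d -> R,
    (exists thA : 'rV[R]_MA, fstar = (fun x => f x thA)) ->
    (exists thB : 'rV[R]_MB, fstar = (fun x => g x thB)) /\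
    (exists nA nB : nat,
       is_optimistic_sample_size f l fstar nA /\
       is_optimistic_sample_size g l fstar nB /\
       (nB <= nA)%N /\ (nA <= MA)%N).
Proof.
move=> f_model g_model hl P_crit _ [thA ->].
split; first by exists (P thA); have [] := P_crit thA.
have [s [s_uniq s_size s_uni]] := exists_unisolvent_sample f thA.
have guar_s : LLR_guarantee f l (fun x => f x thA) (size s).
  apply/(LLR_guaranteeP _ _ _ hl); exists (sample s), thA.
  by split=> //; apply: sample_inj.
have [nA optA nA_le] := exists_optimistic_sample_size guar_s.
have [nB optB nB_le] := exists_optimistic_sample_size
  (critical_mapping_LLR_guarantee f_model g_model P_crit hl optA.1).
by exists nA, nB; do !split=> //; apply: leq_trans nA_le s_size.
Qed.
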